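(* Let $A$ be a cyclic Leibniz algebra generated by $a$. Then $A$ has a unique Cartan subalgebra, namely the Fitting null component $A_0=\{b\in A: L_a^m(b)=0 \text{ for some } m\ge1\}$ of $L_a$ acting on $A$.
   Context: A (left) Leibniz algebra is an algebra satisfying $x(yz)=(xy)z+y(xz)$ for all $x,y,z$; all algebras are finite-dimensional over a field. $A$ is cyclic generated by $a$ if $A$ is generated as an algebra by the single element $a$. $L_a:A\to A$ is left multiplication $b\mapsto ab$. The normalizer of a subalgebra $C$ is $N_A(C)=\{x\in A: xC\subseteq C,\ Cx\subseteq C\}$. A Cartan subalgebra is a nilpotent subalgebra $C$ with $N_A(C)=C$, where nilpotent means $C^t=0$ for some $t$ ($C^1=C$, $C^{j+1}=CC^j$). *)

From HB Require Import structures.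
From mathcomp Require Import all_boot all_order all_algebra.
Set Implicit Arguments. Unset Strict Implicit. Unset Printing Implicit Defensive.
Import GRing.Theory.
Local Open Scope ring_scope.

(* A finite-dimensional (non-associative) algebra over a field F is modelled
   as a vector space A : vectType F together with a multiplication
   mul : A -> A -> A that is bilinear. *)
Definition bilinear_mul (F : fieldType) (A : vectType F) (mul : A -> A -> A) :=
  (forall x, linear (mul x)) /\ (forall y, linear (fun x => mul x y)).

Definition left_leibniz (F : fieldType) (A : vectType F) (mul : A -> A -> A) :=
  forall x y z, mul x (mul y z) = mul (mul x y) z + mul y (mul x z).

Definition is_subalgebra (F : fieldType) (A : vectType F) (mul : A -> A -> A)
  (C : {vspace A}) := forall x y, x \in C -> y \in C -> mul x y \in C.

Definition generated_by (F : fieldType) (A : vectType F) (mul : A -> A -> A)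
  (a : A) := forall S : {vspace A}, is_subalgebra mul S -> a \in S -> S = fullv.

(* product UV of subspaces: the subspace spanned by all products uv
   (by bilinearity, spanned by products of basis vectors) *)
Definition prodsp (F : fieldType) (A : vectType F) (mul : A -> A -> A)
  (U V : {vspace A}) : {vspace A} :=
  <<[seq mul u v | u <- vbasis U, v <- vbasis V]>>%VS.

(* cpow C t = C^t, with C^1 = C, C^(j+1) = C C^j  (C^0 := C, unused) *)
Fixpoint cpow (F : fieldType) (A : vectType F) (mul : A -> A -> A)
  (C : {vspace A}) (t : nat) : {vspace A} :=
  match t with
  | 0 => C
  | t'.+1 => if t' is 0 then C else prodsp mul C (cpow mul C t')
  end.

Definition nilpotent_sub (F : fieldType) (A : vectType F) (mul : A -> A -> A)
  (C : {vspace A}) := exists t, (0 < t)%N /\ cpow mul C t = 0%VS.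

Definition in_normalizer (F : fieldType) (A : vectType F) (mul : A -> A -> A)
  (C : {vspace A}) (x : A) :=
  forall c, c \in C -> mul x c \in C /\ mul c x \in C.

Definition is_cartan (F : fieldType) (A : vectType F) (mul : A -> A -> A)
  (C : {vspace A}) :=
  [/\ is_subalgebra mul C, nilpotent_sub mul C &
      forall x, in_normalizer mul C x <-> x \in C].

Definition fitting0 (F : fieldType) (A : vectType F) (mul : A -> A -> A)
  (a b : A) := exists m, (1 <= m)%N /\ iter m (mul a) b = 0.

From HB Require Import structures.
From mathcomp Require Import all_boot all_order all_algebra.
Set Implicit Arguments. Unset Strict Implicit. Unset Printing Implicit Defensive.
Import GRing.Theory.
Local Open Scope ring_scope.

(* 1. Fitting lemma for an endomorphism f of a finite-dimensional space V:
      with n = dim V + 1, the null component V0 = ker f^n contains every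
      vector killed by some power of f, f^-1(V0) = V0, and V = V0 + im f^n.
   2. In any left Leibniz algebra the left annihilator Ann = {y | yA = 0}
      contains all squares x x and is a left ideal.
   3. If A is generated by a, then Fa + Ann is a subalgebra, hence all of A;
      consequently every left multiplication L_x is a scalar multiple of L_a
      and A A lies in Ann.
   4. A0 = ker L_a^n is a Cartan subalgebra: products C^(j+1) lie in
      L_a^j(C); writing a = a0 + a1 with a0 in A0 and a1 in im L_a^n
      (inside Ann) gives L_a0 = L_a, so the normalizer of A0 is A0.
   5. A Cartan subalgebra C equals A0: either C lies in Ann, which forces
      L_a = 0 and C = A = A0, or C contains some c with L_c = k L_a, k <> 0,
      and then nilpotency gives C <= A0 while self-normalization gives
      A0 <= C. *)

Definition lfun_of (F : fieldType) (U V : vectType F) (f : U -> V)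
  (hf : linear f) : 'Hom(U, V) :=
  linfun (HB.pack_for {linear U -> V} f (GRing.isLinear.Build F U V *:%R f hf)).

Lemma lfun_ofE (F : fieldType) (U V : vectType F) (f : U -> V) (hf : linear f) :
  lfun_of hf =1 f.
Proof. by move=> x; rewrite /lfun_of lfunE. Qed.

Section LinearFunction.
Variables (F : fieldType) (U V : vectType F) (f : U -> V).
Hypothesis hf : linear f.

Lemma linD u v : f (u + v) = f u + f v.
Proof. by rewrite -!(lfun_ofE hf) linearD. Qed.

Lemma linZ k u : f (k *: u) = k *: f u.
Proof. by rewrite -!(lfun_ofE hf) linearZ. Qed.

Lemma lin0 : f 0 = 0.
Proof. by rewrite -(lfun_ofE hf) linear0. Qed.

Lemma lin_sum m (G : 'I_m -> U) : f (\sum_(i < m) G i) = \sum_(i < m) f (G i).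
Proof.
by rewrite -(lfun_ofE hf) linear_sum; apply: eq_bigr => i _; rewrite [LHS]lfun_ofE.
Qed.

End LinearFunction.

Section Fitting.
Variables (F : fieldType) (V : vectType F) (f : 'End(V)).

Definition lfun_pow (i : nat) : 'End(V) := iter i (comp_lfun f) \1%VF.

Lemma lfun_powE i x : lfun_pow i x = iter i f x.
Proof.
elim: i => [|i IH]; first by rewrite id_lfunE.
by rewrite /= comp_lfunE -IH.
Qed.

Lemma iter_lfun0 i : iter i f 0 = 0.
Proof. by elim: i => [|i IH] //=; rewrite IH linear0. Qed.

Definition kerpow (i : nat) : {vspace V} := lker (lfun_pow i).

Lemma mem_kerpow i x : (x \in kerpow i) = (iter i f x == 0).
Proof. by rewrite memv_ker lfun_powE. Qed.

Lemma kerpowS i : (kerpow i <= kerpow i.+1)%VS.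
Proof.
by apply/subvP => x; rewrite !mem_kerpow iterS => /eqP ->; rewrite linear0.
Qed.

(* either the first i steps of the kernel chain were all strict, so that
   ker f^i has dimension at least i, or the chain stalled at some j < i *)
Lemma kerpow_chain i :
  (i <= \dim (kerpow i))%N \/ exists2 j, (j < i)%N & kerpow j = kerpow j.+1.
Proof.
elim: i => [|i [IH|[j hj e]]]; first by left.
- case: (eqVneq (kerpow i) (kerpow i.+1)) => e; first by right; exists i.
  left; apply: leq_ltn_trans IH _.
  by rewrite (ltn_leqif (dimv_leqif_eq (kerpowS i))) e.
- by right; exists j => //; apply: ltnW.
Qed.

Definition kernel_stable (j : nat) :=
  forall x, iter j.+1 f x = 0 -> iter j f x = 0.

Lemma kernel_stableD j k : kernel_stable j -> kernel_stable (j + k).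
Proof. by move=> Sj x; rewrite -addSn !iterD; apply: Sj. Qed.

Definition fitting_exp : nat := (\dim {:V}).+1.

Lemma kernel_stable_fitting : kernel_stable fitting_exp.
Proof.
have [h|[j hj e]] := kerpow_chain fitting_exp.
  by have := leq_trans h (dimvS (subvf _)); rewrite ltnn.
have Sj : kernel_stable j.
  by move=> x /eqP hx; apply/eqP; rewrite -mem_kerpow e mem_kerpow.
by rewrite -(subnKC (ltnW hj)); apply: kernel_stableD.
Qed.

Definition fitting_null : {vspace V} := kerpow fitting_exp.

Lemma fitting_null_iter k x :
  iter (fitting_exp + k) f x = 0 -> x \in fitting_null.
Proof.
rewrite mem_kerpow; elim: k => [|k IH] h; first by rewrite addn0 in h; apply/eqP.
by apply: IH; apply: kernel_stableD kernel_stable_fitting _ _; rewrite -addnS.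
Qed.

Lemma mem_fitting_null x :
  x \in fitting_null <-> exists m, (1 <= m)%N /\ iter m f x = 0.
Proof.
split=> [|[m [_ hm]]].
  by rewrite mem_kerpow => /eqP h; exists fitting_exp.
by apply: (@fitting_null_iter m); rewrite iterD hm iter_lfun0.
Qed.

Lemma fitting_null_stable x : x \in fitting_null -> f x \in fitting_null.
Proof.
by rewrite !mem_kerpow -iterSr iterS => /eqP ->; rewrite linear0.
Qed.

Lemma fitting_null_preimage x : f x \in fitting_null -> x \in fitting_null.
Proof.
rewrite !mem_kerpow -iterSr => /eqP h.
by apply/eqP; apply: kernel_stable_fitting.
Qed.

Lemma fitting_decomposition :
  (fitting_null + limg (lfun_pow fitting_exp))%VS = fullv.
Proof.
have cap0 : (fitting_null :&: limg (lfun_pow fitting_exp))%VS = 0%VS.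
  apply/eqP; rewrite -subv0; apply/subvP => x; rewrite memv_cap memv0.
  case/andP => hx /memv_imgP [z _ hz]; move: hx; rewrite hz.
  rewrite lfun_powE mem_kerpow -iterD => /eqP h.
  by rewrite -mem_kerpow; apply: fitting_null_iter h.
apply/eqP; rewrite eqEdim subvf /=.
have := dimv_sum_cap fitting_null (limg (lfun_pow fitting_exp)).
rewrite cap0 dimv0 addn0 => ->.
by have := limg_ker_dim (lfun_pow fitting_exp) fullv; rewrite capfv => <-.
Qed.

End Fitting.

Section Bilinear.
Variables (F : fieldType) (A : vectType F) (mul : A -> A -> A).
Hypothesis hbil : bilinear_mul mul.

Lemma lmulD x u v : mul x (u + v) = mul x u + mul x v.
Proof. exact: (linD (hbil.1 x)). Qed.

Lemma lmulZ x k u : mul x (k *: u) = k *: mul x u.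
Proof. exact: (linZ (hbil.1 x)). Qed.

Lemma lmul0 x : mul x 0 = 0.
Proof. exact: (lin0 (hbil.1 x)). Qed.

Lemma rmulD y u v : mul (u + v) y = mul u y + mul v y.
Proof. exact: (linD (hbil.2 y)). Qed.

Lemma rmulZ y k u : mul (k *: u) y = k *: mul u y.
Proof. exact: (linZ (hbil.2 y)). Qed.

Lemma cpowSS (C : {vspace A}) j : cpow mul C j.+2 = prodsp mul C (cpow mul C j.+1).
Proof. by []. Qed.

Lemma prodsp_min (U V W : {vspace A}) :
  (forall u v, u \in U -> v \in V -> mul u v \in W) -> (prodsp mul U V <= W)%VS.
Proof.
move=> H; apply/span_subvP => x /allpairsP [[u v] [/= hu hv ->]].
by apply: H; apply: vbasis_mem.
Qed.

Lemma memv_prodsp (U V : {vspace A}) u v :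
  u \in U -> v \in V -> mul u v \in prodsp mul U V.
Proof.
move=> hu hv; rewrite (coord_vbasis hu) (coord_vbasis hv) (lin_sum (hbil.2 _)).
apply: rpred_sum => i _; rewrite rmulZ (lin_sum (hbil.1 _)); apply: memvZ.
apply: rpred_sum => j _; rewrite lmulZ; apply/memvZ/memv_span/allpairsP.
by exists ((vbasis U)`_i, (vbasis V)`_j); split; rewrite ?mem_nth ?size_tuple.
Qed.

Lemma iter_lmul_cpow (C : {vspace A}) c y j :
  c \in C -> y \in C -> iter j (mul c) y \in cpow mul C j.+1.
Proof.
move=> hc hy; elim: j => [|j IH] //.
by rewrite cpowSS iterS; apply: memv_prodsp.
Qed.

End Bilinear.

Section LeftAnnihilator.
Variables (F : fieldType) (A : vectType F) (mul : A -> A -> A).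
Hypothesis hbil : bilinear_mul mul.
Hypothesis hleib : left_leibniz mul.

Lemma lmul_linear : linear (fun x => lfun_of (hbil.1 x)).
Proof.
move=> k u v; apply/lfunP => w.
by rewrite add_lfunE scale_lfunE !lfun_ofE; apply: (hbil.2 w).
Qed.

Definition lann : {vspace A} := lker (lfun_of lmul_linear).

Lemma mem_lann y : y \in lann <-> forall w, mul y w = 0.
Proof.
rewrite memv_ker lfun_ofE; split=> [/eqP h w | h].
  by rewrite -(lfun_ofE (hbil.1 y)) h zero_lfunE.
by apply/eqP/lfunP => w; rewrite lfun_ofE zero_lfunE.
Qed.

(* the identity for y = x reads x (x z) = (x x) z + x (x z) *)
Lemma sqr_lann x : mul x x \in lann.
Proof.
by apply/mem_lann => z; apply: (addIr (mul x (mul x z))); rewrite -hleib add0r.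
Qed.

(* the identity x (y w) = (x y) w + y (x w) with y in Ann *)
Lemma lann_lideal x y : y \in lann -> mul x y \in lann.
Proof.
move=> /mem_lann hy; apply/mem_lann => w.
by have := hleib x y w; rewrite !hy (lmul0 hbil) addr0 => ->.
Qed.

End LeftAnnihilator.

Section Cyclic.
Variables (F : fieldType) (A : vectType F) (mul : A -> A -> A).
Hypothesis hbil : bilinear_mul mul.
Hypothesis hleib : left_leibniz mul.
Variable a : A.
Hypothesis hgen : generated_by mul a.

Local Notation La := (lfun_of (hbil.1 a)).
Local Notation n := (fitting_exp A).

(* F a + Ann is a subalgebra containing a, hence all of A *)
Lemma cyclic_split x : exists k, exists2 y, y \in lann hbil & x = k *: a + y.
Proof.
pose S := (<[a]> + lann hbil)%VS.
have hS : is_subalgebra mul S.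
  move=> u v /memv_addP [_ /vlineP [k ->] [y /mem_lann hy ->]].
  move=> /memv_addP [_ /vlineP [k' ->] [y' hy' ->]].
  rewrite (rmulD hbil) hy addr0 (rmulZ hbil) (lmulD hbil) (lmulZ hbil).
  apply: (subvP (addvSr _ _)); apply/memvZ/rpredD; last exact: lann_lideal.
  exact/memvZ/sqr_lann.
have aS : a \in S by apply: (subvP (addvSl _ _)); apply: memv_line.
have := memvf x; rewrite -(hgen hS aS).
by case/memv_addP => _ /vlineP [k ->] [y hy ->]; exists k, y.
Qed.

Lemma lmul_scalar x : exists k, forall y, mul x y = k *: mul a y.
Proof.
have [k [y /mem_lann hy ->]] := cyclic_split x.
by exists k => z; rewrite (rmulD hbil) (rmulZ hbil) hy addr0.
Qed.

Lemma mul_lann x y : mul x y \in lann hbil.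
Proof.
have [l hl] := lmul_scalar x; have [k [z hz ->]] := cyclic_split y.
rewrite (lmulD hbil) (lmulZ hbil) hl; apply: rpredD; last exact: lann_lideal.
exact/memvZ/memvZ/sqr_lann.
Qed.

Definition cyclic_null : {vspace A} := fitting_null La.
Local Notation A0 := cyclic_null.

Lemma iter_La m x : iter m La x = iter m (mul a) x.
Proof. by apply: eq_iter; apply: lfun_ofE. Qed.

Lemma mem_cyclic_null b : b \in A0 <-> fitting0 mul a b.
Proof.
split=> [/mem_fitting_null [m [hm h]] | [m [hm h]]].
  by exists m; rewrite -iter_La.
by apply/mem_fitting_null; exists m; rewrite iter_La.
Qed.

Lemma iter_cyclic_null m b : iter m (mul a) b = 0 -> b \in A0.
Proof. by move=> h; apply/mem_cyclic_null; exists m.+1; rewrite iterS h lmul0. Qed.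

(* x y = k (a y), and A0 is L_a-stable *)
Lemma cyclic_null_subalgebra : is_subalgebra mul A0.
Proof.
move=> x y _ hy; have [k ->] := lmul_scalar x; apply: memvZ.
by rewrite -(lfun_ofE (hbil.1 a)); apply: fitting_null_stable.
Qed.

(* C^(j+1) <= L_a^j(C) for every subspace C, since each L_u is a multiple of L_a *)
Lemma cpow_img (C : {vspace A}) j : (cpow mul C j.+1 <= lfun_pow La j @: C)%VS.
Proof.
elim: j => [|j IH].
  apply/subvP => v hv; have -> : v = lfun_pow La 0 v by rewrite lfun_powE.
  exact: memv_img.
rewrite cpowSS; apply: prodsp_min => u _ _ /(subvP IH) /memv_imgP [c hc ->].
have [k ->] := lmul_scalar u.
have -> : k *: mul a (lfun_pow La j c) = lfun_pow La j.+1 (k *: c).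
  rewrite linearZZ; congr (_ *: _).
  by rewrite lfun_powE -(lfun_ofE (hbil.1 a)); symmetry; apply: lfun_powE.
exact/memv_img/memvZ.
Qed.

(* A0^(n+1) <= L_a^n(A0) = 0 *)
Lemma cyclic_null_nilpotent : nilpotent_sub mul A0.
Proof.
exists n.+1; split=> //; apply/eqP; rewrite -subv0.
by apply: subv_trans (cpow_img _ _) _; rewrite subv0 -lkerE; apply: subvv.
Qed.

(* a = a0 + a1 with a0 in A0 and a1 in L_a^n(A) <= A A <= Ann, so L_a0 = L_a *)
Lemma cyclic_null_lmul : exists2 a0, a0 \in A0 & forall y, mul a0 y = mul a y.
Proof.
have := memvf a; rewrite -(fitting_decomposition La).
case/memv_addP => a0 ha0 [_ /memv_imgP [z _ ->] ea]; exists a0 => // y.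
have /mem_lann ann1 : lfun_pow La n z \in lann hbil.
  by rewrite lfun_powE iterS lfun_ofE; apply: mul_lann.
by rewrite ea (rmulD hbil) ann1 addr0.
Qed.

(* if x normalizes A0 then a0 x = a x lies in A0, hence so does x *)
Lemma cyclic_null_self_normalizing x : in_normalizer mul A0 x -> x \in A0.
Proof.
move=> hx; have [a0 ha0 ha0E] := cyclic_null_lmul.
by apply: fitting_null_preimage; rewrite lfun_ofE -ha0E; apply: (hx a0 ha0).2.
Qed.

Lemma cyclic_null_cartan : is_cartan mul A0.
Proof.
split; [exact: cyclic_null_subalgebra | exact: cyclic_null_nilpotent |].
move=> x; split; first exact: cyclic_null_self_normalizing.
by move=> hx c hc; split; apply: cyclic_null_subalgebra.
Qed.

(* in a self-normalizing, L_a-stable subalgebra C, L_a^m x in C forces x in C,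
   because L_x and L_c (c in C) are multiples of L_a *)
Lemma cartan_iter_preimage (C : {vspace A}) m x :
  is_cartan mul C -> (forall y, y \in C -> mul a y \in C) ->
  iter m (mul a) x \in C -> x \in C.
Proof.
case=> _ _ hnorm hstab; elim: m x => [//|m IH] x; rewrite iterSr => /IH hax.
apply/hnorm => c hc; split.
  by have [k ->] := lmul_scalar x; apply/memvZ/hstab.
by have [k ->] := lmul_scalar c; apply: memvZ.
Qed.

(* a Cartan subalgebra inside Ann normalizes Ann and a, forcing L_a = 0 and
   hence C = A = A0 *)
Lemma cartan_sub_lann (C : {vspace A}) :
  is_cartan mul C -> (C <= lann hbil)%VS -> C = A0.
Proof.
case=> _ _ hnorm hCann.
have annC y : y \in lann hbil -> y \in C.
  move=> /mem_lann hy; apply/hnorm => c /(subvP hCann) /mem_lann hc.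
  by rewrite hy hc mem0v.
have aC : a \in C.
  apply/hnorm => c /(subvP hCann) /mem_lann hc.
  by rewrite hc mem0v; split=> //; apply/annC/mul_lann.
have mul0 x y : mul x y = 0.
  have [k ->] := lmul_scalar x.
  by have /(subvP hCann) /mem_lann -> := aC; rewrite scaler0.
have -> : C = fullv.
  by apply/vspaceP => x; rewrite memvf; apply/hnorm => c _; rewrite !mul0 mem0v.
by apply/vspaceP => x; rewrite memvf (@iter_cyclic_null 1 x) //=; apply: mul0.
Qed.

(* otherwise C contains c with L_c = k L_a, k <> 0: C is L_a-stable, so
   nilpotency gives C <= A0 and self-normalization gives A0 <= C *)
Lemma cartan_not_sub_lann (C : {vspace A}) :
  is_cartan mul C -> ~~ (C <= lann hbil)%VS -> C = A0.
Proof.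
move=> hC /subvPn [c hc hcann]; have [hsub [t [ht hCt]] _] := hC.
have [k hk] := lmul_scalar c.
have k0 : k != 0.
  by apply: contraNneq hcann => k0; apply/mem_lann => w; rewrite hk k0 scale0r.
have hstab y : y \in C -> mul a y \in C.
  by move=> hy; rewrite -(scalerK k0 (mul a y)) -hk; apply/memvZ/hsub.
have iter_c j y : iter j (mul c) y = k ^+ j *: iter j (mul a) y.
  elim: j => [|j IH]; first by rewrite scale1r.
  by rewrite !iterS IH hk (lmulZ hbil) scalerA exprS.
have CA0 : (C <= A0)%VS.
  apply/subvP => y hy; apply: (@iter_cyclic_null t.-1).
  have := iter_lmul_cpow hbil t.-1 hc hy; rewrite prednK // hCt memv0 iter_c.
  by rewrite scaler_eq0 expf_eq0 (negbTE k0) andbF => /eqP.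
have A0C : (A0 <= C)%VS.
  apply/subvP => x; rewrite mem_kerpow => /eqP hx.
  by apply: (@cartan_iter_preimage _ n) => //; rewrite -iter_La hx mem0v.
by apply/eqP; rewrite eqEsubv CA0.
Qed.

Lemma cartan_unique (C : {vspace A}) : is_cartan mul C -> C = A0.
Proof.
move=> hC; have [hCann | hCann] := boolP (C <= lann hbil)%VS.
  exact: cartan_sub_lann.
exact: cartan_not_sub_lann.
Qed.

End Cyclic.

Theorem mainTheorem11 (F : fieldType) (A : vectType F) (mul : A -> A -> A)
  (hbil : bilinear_mul mul) (hleib : left_leibniz mul)
  (a : A) (hgen : generated_by mul a) :
  exists C0 : {vspace A},
    (forall b, b \in C0 <-> fitting0 mul a b) /\
    is_cartan mul C0 /\
    (forall C : {vspace A}, is_cartan mul C -> C = C0).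
Proof.
have cartan := cyclic_null_cartan hbil hleib hgen.
have unique := cartan_unique hbil hleib hgen.
by exists (cyclic_null hbil a); split; [exact: mem_cyclic_null | split].
Qed.
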